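(* Let $\hat{\mathcal{A}}^\pi[\mathcal{D}^{\mathcal{K}}_{\sigma}]$ be an anchoring learning trace with asymptotic backbone $\{\hat\alpha_i\}_{i>\omega(\nu,\varsigma,\lambda)}$. - If $\{\hat\alpha_i\}$ is decreasing, then for all $i>\omega(\nu,\varsigma,\lambda)$, $$\hat{\mathcal{A}}^\pi_{i+1}[\mathcal{D}^{\mathcal{K}}_{\sigma}](\infty)\le\hat\alpha_i-\sum_{j\le i+1}\hat\rho_{i+1}(j).$$ - If $\{\hat\alpha_i\}$ is increasing, then for all $i>\omega(\nu,\varsigma,\lambda)$, $$\hat{\mathcal{A}}^\pi_{i+1}[\mathcal{D}^{\mathcal{K}}_{\sigma}](\infty)\ge\hat\alpha_i-\sum_{j\le i+1}\hat\rho_{i+1}(j).$$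
   Context: $\mathbb{N}=\{1,2,\dots\}$. Setting. $\mathcal{D}$ is a training data base, assumed independently and identically distributed. A learning scheme $\mathcal{D}^{\mathcal{K}}_{\sigma}=[\mathcal{K},\sigma,\{\mathcal{D}_i\}]$ consists of a nonempty kernel $\mathcal{K}\subsetneq\mathcal{D}$, a step function $\sigma:\mathbb{N}\to\mathbb{N}$, and $\mathcal{D}_1=\mathcal{K}$, $\mathcal{D}_i=\mathcal{D}_{i-1}\cup\mathcal{I}_i$, $\mathcal{I}_i\subset\mathcal{D}\setminus\mathcal{D}_{i-1}$, $|\mathcal{I}_i|=\sigma(i)$. The learning curve $\mathcal{A}_{\infty\infty}[\mathcal{D}^{\mathcal{K}}_{\sigma}]$ gives the accuracy of the studied system trained on the first $x$ items; the observations are $[x_i,\mathcal{A}_{\infty\infty}(x_i)]$ with $x_i=|\mathcal{D}_i|$. The learning curve is positive definite, strictly increasing, concave, upper bounded by $100$, with horizontal asymptote $y=\alpha_{\infty\infty}$. An accuracy pattern is a map $\pi:(\mathbb{R}^+)^n\to C^\infty(0,\infty)$ whose values are positive definite, concave and strictly increasing on $(0,\infty)$. For $\ell\ge3$, the learning trend $\mathcal{A}^\pi_\ell\in\pi$ fits $\{[x_i,\mathcal{A}_{\infty\infty}(x_i)]\}_{i=1}^\ell$. Fitting is a regression minimizing a weighting function of the residuals, and the residuals over all fitted points sum to zero. The learning trace is $\{\mathcal{A}^\pi_\ell\}$, with asymptotic backbone $\{\alpha_\ell\}$, where $y=\alpha_\ell$ is the asymptote of $\mathcal{A}^\pi_\ell$.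 Working level. Given $\nu\in(0,1)$, $\varsigma\in\mathbb{N}$ and $\lambda\in\mathbb{N}\cup\{0\}$, the working level $\omega(\nu,\varsigma,\lambda)$ is the smallest natural number $\omega$ with $\frac{\sqrt[\varsigma]{\nu}}{1-\nu}\ge\frac{|\alpha_{i+1}-\alpha_i|}{|\mathcal{D}_{i+1}|-|\mathcal{D}_i|}$ for all $i$ with $\omega\le i\le\omega+\lambda$. Anchoring. Given anchors $\hat{\mathcal{A}}^\pi_\ell(\infty)\in\mathbb{R}^+$ for $\ell>\omega(\nu,\varsigma,\lambda)$, the learning trend of level $\ell$ with anchor is a curve $\hat{\mathcal{A}}^\pi_\ell\in\pi$ fitting $\{[x_i,\mathcal{A}_{\infty\infty}(x_i)]\}_{i=1}^\ell\cup\{[\infty,\hat{\mathcal{A}}^\pi_\ell(\infty)]\}$, with asymptote $y=\hat\alpha_\ell$. Its residuals are $\hat\rho_\ell(i)=(\mathcal{A}_{\infty\infty}-\hat{\mathcal{A}}^\pi_\ell)(|\mathcal{D}_i|)$ and $\hat\rho_\ell(\infty)=\hat{\mathcal{A}}^\pi_\ell(\infty)-\hat\alpha_\ell$. When $\{\hat\alpha_\ell\}$ is positive definite and converges monotonically to $\alpha_{\infty\infty}$, the sequence $\{\hat{\mathcal{A}}^\pi_\ell\}_{\ell>\omega}$ is called an anchoring learning trace, with asymptotic backbone $\{\hat\alpha_\ell\}$. *)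

From Stdlib Require Import Reals List.
From Coquelicot Require Import Coquelicot.
Open Scope R_scope.

Definition pos_on (f : R -> R) : Prop := forall x, 0 < x -> 0 < f x.
Definition strict_incr_on (f : R -> R) : Prop :=
  forall x y, 0 < x -> x < y -> f x < f y.
Definition concave_on (f : R -> R) : Prop :=
  forall x y t, 0 < x -> 0 < y -> 0 <= t <= 1 ->
    t * f x + (1 - t) * f y <= f (t * x + (1 - t) * y).
Definition smooth_on (f : R -> R) : Prop :=
  forall (m : nat) x, 0 < x -> ex_derive_n f m x.

(* pi : (R^+)^n -> C^oo(0,oo), parameters represented as lists of length n *)
Definition pos_params (n : nat) (p : list R) : Prop :=
  length p = n /\ List.Forall (fun a => 0 < a) p.

Definition accuracy_pattern (n : nat) (pi : list R -> R -> R) : Prop :=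
  forall p, pos_params n p ->
    smooth_on (pi p) /\ pos_on (pi p) /\ concave_on (pi p) /\ strict_incr_on (pi p).

Definition in_pattern (n : nat) (pi : list R -> R -> R) (f : R -> R) : Prop :=
  exists p, pos_params n p /\ forall x, 0 < x -> f x = pi p x.

(* D_1 = K with |K| = k ; |D_i| = |D_(i-1)| + sigma i for i >= 2 *)
Fixpoint dsize (k : nat) (sigma : nat -> nat) (i : nat) : nat :=
  match i with
  | O => k
  | S O => k
  | S ((S _) as j) => (dsize k sigma j + sigma i)%nat
  end.

Definition xs (k : nat) (sigma : nat -> nat) (i : nat) : R := INR (dsize k sigma i).

Definition learning_curve (A : R -> R) (ainf : R) : Prop :=
  pos_on A /\ strict_incr_on A /\ concave_on A /\
  (forall x, 0 < x -> A x <= 100) /\ is_lim A p_infty ainf.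

Definition resid (A : R -> R) (x : nat -> R) (l : nat) (g : R -> R) : list R :=
  map (fun j => A (x j) - g (x j)) (seq 1 l).

Definition resid_sum (A : R -> R) (x : nat -> R) (l : nat) (g : R -> R) : R :=
  sum_n_m (fun j => A (x j) - g (x j)) 1 l.

Definition fits (n : nat) (pi : list R -> R -> R) (W : list R -> R)
  (A : R -> R) (x : nat -> R) (l : nat) (g : R -> R) : Prop :=
  in_pattern n pi g /\
  (forall h, in_pattern n pi h -> W (resid A x l g) <= W (resid A x l h)) /\
  resid_sum A x l g = 0.

(* g in pi, with asymptote y = b, fits the observations plus [oo, anchor];
   residual at oo is anchor - b; all residuals sum to zero *)
Definition fits_anchored (n : nat) (pi : list R -> R -> R) (W : list R -> R)
  (A : R -> R) (x : nat -> R) (l : nat) (anchor : R) (g : R -> R) (b : R) : Prop :=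
  in_pattern n pi g /\ is_lim g p_infty b /\
  (forall h c, in_pattern n pi h -> is_lim h p_infty c ->
     W (resid A x l g ++ (anchor - b) :: nil) <= W (resid A x l h ++ (anchor - c) :: nil)) /\
  resid_sum A x l g + (anchor - b) = 0.

Definition learning_trace (n : nat) (pi : list R -> R -> R) (W : list R -> R)
  (A : R -> R) (x : nat -> R) (Atr : nat -> R -> R) (alpha : nat -> R) : Prop :=
  forall l, (3 <= l)%nat -> fits n pi W A x l (Atr l) /\ is_lim (Atr l) p_infty (alpha l).

Definition wl_cond (alpha : nat -> R) (x : nat -> R) (nu : R) (vs lam w : nat) : Prop :=
  forall i, (w <= i <= w + lam)%nat ->
    Rabs (alpha (S i) - alpha i) / (x (S i) - x i) <= Rpower nu (/ INR vs) / (1 - nu).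

(* omega is the smallest admissible level (levels start at 3, where the
   backbone {alpha_l} starts) *)
Definition working_level (alpha : nat -> R) (x : nat -> R) (nu : R) (vs lam w : nat) : Prop :=
  (3 <= w)%nat /\ wl_cond alpha x nu vs lam w /\
  (forall w', (3 <= w' < w)%nat -> ~ wl_cond alpha x nu vs lam w').

Definition decreasing_from (omega : nat) (u : nat -> R) : Prop :=
  forall i j, (omega < i <= j)%nat -> u j <= u i.
Definition increasing_from (omega : nat) (u : nat -> R) : Prop :=
  forall i j, (omega < i <= j)%nat -> u i <= u j.

Definition anchoring_trace (n : nat) (pi : list R -> R -> R) (W : list R -> R)
  (A : R -> R) (ainf : R) (x : nat -> R) (omega : nat)
  (anchor : nat -> R) (Ah : nat -> R -> R) (ah : nat -> R) : Prop :=
  (forall l, (omega < l)%nat ->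
     0 < anchor l /\ 0 < ah l /\ fits_anchored n pi W A x l (anchor l) (Ah l) (ah l)) /\
  is_lim_seq ah ainf /\
  (decreasing_from omega ah \/ increasing_from omega ah).

From Stdlib Require Import Reals List Lra Lia.
From Coquelicot Require Import Coquelicot.
Open Scope R_scope.

(* The residuals of an anchored fit sum to zero, so its anchor is its asymptote
   minus the residual sum over the data points; comparing the asymptotes of two
   consecutive levels through the monotonicity of the backbone gives both bounds. *)

Lemma fits_anchored_anchorE {n : nat} {pi : list R -> R -> R} {W : list R -> R}
  {A : R -> R} {x : nat -> R} {l : nat} {anchor : R} {g : R -> R} {b : R} :
  fits_anchored n pi W A x l anchor g b -> anchor = b - resid_sum A x l g.
Proof. intros [_ [_ [_ Hsum]]]; lra. Qed.

Lemma anchoring_trace_anchorE {n : nat} {pi : list R -> R -> R} {W : list R -> R}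
  {A : R -> R} {ainf : R} {x : nat -> R} {omega : nat}
  {anchor : nat -> R} {Ah : nat -> R -> R} {ah : nat -> R} (l : nat) :
  anchoring_trace n pi W A ainf x omega anchor Ah ah -> (omega < l)%nat ->
  anchor l = ah l - resid_sum A x l (Ah l).
Proof.
  intros [Hfit _] Hl.
  destruct (Hfit l Hl) as [_ [_ Hl_fit]].
  exact (fits_anchored_anchorE Hl_fit).
Qed.

Theorem theorem5 (n : nat) (pi : list R -> R -> R) (W : list R -> R)
  (k : nat) (sigma : nat -> nat) (A : R -> R) (ainf : R)
  (Atr : nat -> R -> R) (alpha : nat -> R)
  (nu : R) (vs lam omega : nat)
  (anchor : nat -> R) (Ah : nat -> R -> R) (ah : nat -> R) :
  accuracy_pattern n pi ->
  (1 <= k)%nat -> (forall i, (1 <= sigma i)%nat) ->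
  learning_curve A ainf ->
  learning_trace n pi W A (xs k sigma) Atr alpha ->
  0 < nu < 1 -> (1 <= vs)%nat ->
  working_level alpha (xs k sigma) nu vs lam omega ->
  anchoring_trace n pi W A ainf (xs k sigma) omega anchor Ah ah ->
  (decreasing_from omega ah ->
     forall i, (omega < i)%nat ->
       anchor (S i) <= ah i - resid_sum A (xs k sigma) (S i) (Ah (S i))) /\
  (increasing_from omega ah ->
     forall i, (omega < i)%nat ->
       anchor (S i) >= ah i - resid_sum A (xs k sigma) (S i) (Ah (S i))).
Proof.
  intros _ _ _ _ _ _ _ _ Htrace.
  split; intros Hmono i Hi;
    rewrite (anchoring_trace_anchorE (S i) Htrace) by lia;
    specialize (Hmono i (S i) ltac:(lia)); lra.
Qed.
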